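(* Let $C$ be a strongly connected component of $G$. If at least one vertex of $C$ has out-degree greater than one within $C$, then $\psi$ restricted to $\Delta_C$ is chaotic. If every vertex of $C$ has out-degree exactly one within $C$, then $\Delta_C$ is a single periodic orbit of $\psi$.
   Context: $G$ is a finite directed graph (loops allowed) with vertex set $V$. $\Omega$ is the set of bi-infinite paths in $G$, i.e. sequences $(x_i)_{i\in\mathbb Z}\in V^{\mathbb Z}$ such that for every $i$ there is an edge from $x_i$ to $x_{i+1}$. Fix $h>0$. $\bar\Delta$ is the set of functions $x:\mathbb R\to V$ that are constant on each interval $[nh,(n+1)h)$, $n\in\mathbb Z$, and satisfy $(x(ih))_{i\in\mathbb Z}\in\Omega$. $\Delta=\{x(\cdot+t): x\in\bar\Delta,\ t\in\mathbb R\}$, with metric $d(x,y)=\sum_{i\in\mathbb Z}4^{-|i|}\frac1h\int_{ih}^{(i+1)h}\delta(x,y,t)\,dt$, where $\delta(x,y,t)=1$ if $x(t)\ne y(t)$ and $0$ otherwise. The flow $\psi:\mathbb R\times\Delta\to\Delta$ is $\psi(t,x)=x(\cdot+t)$. A strongly connected component of $G$ is a maximal nonempty set $C\subseteq V$ such that for all $u,v\in C$ (including $u=v$) there is a directed path of positive length from $u$ to $v$ with all vertices in $C$. The lift of $C$ is $\Delta_C=\{f\in\Delta: f(t)\in C \text{ for all } t\in\mathbb R\}$. A flow on a metric space $X$ is chaotic if (i) it has sensitive dependence on initial conditions (there is $\delta>0$ such that for every $x\in X$ and every neighborhood $B$ of $x$ there are $y\in B$, $t>0$ with $d(\Phi_t(x),\Phi_t(y))>\delta$),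 (ii) its periodic points are dense in $X$, and (iii) it is topologically transitive (there is $x\in X$ with $\omega(x)=X$, where $\omega(x)$ is the set of limits of $\Phi_{t_k}(x)$ along sequences $t_k\to+\infty$). *)

From Stdlib Require Import Bool Reals Lra List ZArith Classical ClassicalEpsilon FunctionalExtensionality.
Open Scope R_scope.

Section Graph.
Variable V : Type.
Variable E : V -> V -> bool.

Inductive reach_in (C : V -> bool) : V -> V -> Prop :=
| reach_step : forall u v, C u = true -> C v = true -> E u v = true -> reach_in C u v
| reach_cons : forall u w v, C u = true -> E u w = true -> reach_in C w v -> reach_in C u v.

Definition strongly_connected_set (C : V -> bool) : Prop :=
  (exists v, C v = true) /\
  (forall u v, C u = true -> C v = true -> reach_in C u v).

Definition is_SCC (C : V -> bool) : Prop :=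
  strongly_connected_set C /\
  (forall D : V -> bool, strongly_connected_set D ->
     (forall v, C v = true -> D v = true) -> forall v, D v = true -> C v = true).

(* out-degree of v within C, counted over an exhaustive duplicate-free enumeration *)
Definition outdeg_in (enum : list V) (C : V -> bool) (v : V) : nat :=
  length (filter (fun w => C w && E v w) enum).

Definition in_Delta_bar (h : R) (x : R -> V) : Prop :=
  (forall (n : Z) (t : R), IZR n * h <= t < (IZR n + 1) * h -> x t = x (IZR n * h)) /\
  (forall i : Z, E (x (IZR i * h)) (x ((IZR i + 1) * h)) = true).

Definition in_Delta (h : R) (f : R -> V) : Prop :=
  exists x t, in_Delta_bar h x /\ f = (fun s => x (s + t)).

Definition in_Delta_C (h : R) (C : V -> bool) (f : R -> V) : Prop :=
  in_Delta h f /\ forall t, C (f t) = true.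
End Graph.

Definition psi {V : Type} (t : R) (x : R -> V) : R -> V := fun s => x (s + t).

Definition delta {V : Type} (x y : R -> V) (t : R) : R :=
  if excluded_middle_informative (x t = y t) then 0 else 1.

(* Riemann integral of f over [a,b] (the value is unique when f is integrable;
   all integrands used below are integrable step functions) *)
Definition RInt (f : R -> R) (a b : R) : R :=
  epsilon (inhabits 0) (fun v => exists pr : Riemann_integrable f a b, RiemannInt pr = v).

(* value of a bi-infinite sum  sum_{i in Z} w i, as the limit of symmetric partial sums *)
Definition Zsum (w : Z -> R) : R :=
  epsilon (inhabits 0)
    (fun l => Un_cv (fun N => sum_f_R0 (fun n => if Nat.eqb n 0 then w 0%Z
                                               else w (Z.of_nat n) + w (- Z.of_nat n)%Z) N) l).

Definition dmetric {V : Type} (h : R) (x y : R -> V) : R :=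
  Zsum (fun i => (/ 4) ^ Z.to_nat (Z.abs i) *
                 (/ h * RInt (delta x y) (IZR i * h) ((IZR i + 1) * h))).

Definition sensitive {P : Type} (X : P -> Prop) (d : P -> P -> R) (Phi : R -> P -> P) : Prop :=
  exists dl, dl > 0 /\
    forall x, X x -> forall eps, eps > 0 ->
      exists y t, X y /\ d x y < eps /\ t > 0 /\ d (Phi t x) (Phi t y) > dl.

Definition periodic_point {P : Type} (Phi : R -> P -> P) (p : P) : Prop :=
  exists T, T > 0 /\ Phi T p = p.

Definition dense_periodic {P : Type} (X : P -> Prop) (d : P -> P -> R) (Phi : R -> P -> P) : Prop :=
  forall x, X x -> forall eps, eps > 0 ->
    exists p, X p /\ periodic_point Phi p /\ d x p < eps.

Definition omega_limit {P : Type} (X : P -> Prop) (d : P -> P -> R) (Phi : R -> P -> P)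
  (x : P) (y : P) : Prop :=
  X y /\ exists tk : nat -> R, cv_infty tk /\ Un_cv (fun k => d (Phi (tk k) x) y) 0.

Definition top_transitive {P : Type} (X : P -> Prop) (d : P -> P -> R) (Phi : R -> P -> P) : Prop :=
  exists x, X x /\ forall y, omega_limit X d Phi x y <-> X y.

Definition chaotic {P : Type} (X : P -> Prop) (d : P -> P -> R) (Phi : R -> P -> P) : Prop :=
  sensitive X d Phi /\ dense_periodic X d Phi /\ top_transitive X d Phi.

(* Points of Delta_C are exactly the functions [s |-> a (floor ((s + t) / h))] for bi-infinite
   paths [a] in C, and the weights [4^-|i|] make two of them close exactly when they agree on a
   long window around time 0: agreement on [[-M h, M h]] gives distance at most [4 * 2^-M],
   disagreement on [(0, h)] gives distance at least 1.  Strong connectivity lets any finite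
   stretch of a path be rerouted at will.  Sensitivity: past the window, walk to a vertex with
   two successors in C and leave it along the edge the original path does not take.  Dense
   periodic points: close the window into a cycle and repeat it.  Transitivity: chain all
   finite admissible words into one path, whose orbit then visits every window.  If every
   out-degree in C is 1, the successor map is a single cycle through C, so every path is a
   shift of one periodic path. *)

From Pilot Require Import Defs.
From Stdlib Require Import Reals List ZArith.
Open Scope R_scope.
From Stdlib Require Import Lra Lia Zfloor ClassicalEpsilon FunctionalExtensionality.
From Coquelicot Require Coquelicot.

(** * Step functions *)

Definition steps {V : Type} (h : R) (a : Z -> V) (s : R) : R -> V :=
  fun u => a (Zfloor ((u + s) / h)).

Lemma psi_steps {V : Type} h (a : Z -> V) s t : psi t (steps h a s) = steps h a (s + t).
Proof.
  apply functional_extensionality; intro u; unfold psi, steps.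
  do 3 f_equal; ring.
Qed.

Definition const_on {T : Type} (F : R -> T) (p q : R) : Prop :=
  exists v, forall x, p < x < q -> F x = v.

Lemma const_on_sub {T : Type} (F : R -> T) p q p' q' :
  p <= p' -> q' <= q -> const_on F p q -> const_on F p' q'.
Proof. intros Hp Hq [v Hv]; exists v; intros x Hx; apply Hv; lra. Qed.

Section Steps.
Variables (V : Type) (h : R).
Hypothesis Hh : h > 0.

Lemma steps_on_cell (a : Z -> V) s k u :
  IZR k * h - s <= u < (IZR k + 1) * h - s -> steps h a s u = a k.
Proof.
  intro Hu; unfold steps; f_equal; apply Zfloor_eq.
  split; [apply Rmult_le_reg_r with h | apply Rmult_lt_reg_r with h];
    unfold Rdiv; rewrite ?Rmult_assoc, ?Rinv_l; lra.
Qed.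

Lemma steps_shift (a : Z -> V) c s :
  steps h (fun i => a (i + c)%Z) s = steps h a (s + IZR c * h).
Proof.
  apply functional_extensionality; intro u; unfold steps.
  replace ((u + (s + IZR c * h)) / h) with ((u + s) / h + IZR c) by (field; lra).
  now rewrite Zfloor_addz.
Qed.

Lemma steps_periodic (a : Z -> V) P s :
  (forall i, a (i + P)%Z = a i) -> steps h a (s + IZR P * h) = steps h a s.
Proof.
  intro Ha; rewrite <- steps_shift; f_equal.
  now apply functional_extensionality.
Qed.

Lemma steps_two_pieces (a : Z -> V) s A :
  exists c, A < c <= A + h /\
    const_on (steps h a s) A c /\ const_on (steps h a s) c (A + h).
Proof.
  set (k := Zfloor ((A + s) / h)).
  destruct (Zfloor_bound ((A + s) / h)) as [K1 K2]; fold k in K1, K2.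
  assert (P1 : IZR k * h <= A + s).
  { replace (A + s) with ((A + s) / h * h) by (field; lra).
    apply Rmult_le_compat_r; lra. }
  assert (P2 : A + s < (IZR k + 1) * h).
  { replace (A + s) with ((A + s) / h * h) by (field; lra).
    apply Rmult_lt_compat_r; lra. }
  exists ((IZR k + 1) * h - s); split; [lra|]; split.
  - exists (a k); intros x Hx; apply steps_on_cell; lra.
  - exists (a (k + 1)%Z); intros x Hx; apply steps_on_cell.
    rewrite plus_IZR; lra.
Qed.

(* Indices of the cells of [steps h a s] that meet [[-M h, M h]]. *)
Definition window_lo (s : R) (M : nat) : Z := Zfloor ((- (INR M * h) + s) / h).
Definition window_hi (s : R) (M : nat) : Z := Zfloor ((INR M * h + s) / h).

Lemma steps_agree_on_window (a b : Z -> V) s M :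
  (forall i, (window_lo s M <= i <= window_hi s M)%Z -> a i = b i) ->
  forall u, - (INR M * h) <= u <= INR M * h -> steps h a s u = steps h b s u.
Proof.
  intros Hab u Hu; apply Hab; unfold window_lo, window_hi.
  split; apply Zfloor_le, Rmult_le_compat_r; try lra;
    apply Rlt_le, Rinv_0_lt_compat; lra.
Qed.

Lemma window_eventually_within s M :
  exists N : nat, forall k : nat, (N <= k)%nat ->
    (- Z.of_nat k <= window_lo s M)%Z /\ (window_hi s M <= Z.of_nat k)%Z.
Proof.
  destruct (INR_unbounded (INR M + Rabs s / h + 1)) as [N HN].
  exists N; intros k Hk.
  assert (Hk' : INR N <= IZR (Z.of_nat k)) by (rewrite <- INR_IZR_INZ; apply le_INR; lia).
  assert (Hs : Rabs s / h * h = Rabs s) by (field; lra).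
  pose proof (Rle_abs s); pose proof (Rle_abs (- s)); rewrite Rabs_Ropp in *.
  unfold window_lo, window_hi; split.
  - apply Zfloor_lub. rewrite opp_IZR.
    apply Rmult_le_reg_r with h; [lra|].
    replace ((- (INR M * h) + s) / h * h) with (- (INR M * h) + s) by (field; lra).
    nra.
  - pose proof (Zfloor_bound ((INR M * h + s) / h)) as [F _].
    apply le_IZR; apply Rle_trans with ((INR M * h + s) / h); [lra|].
    apply Rmult_le_reg_r with h; [lra|].
    replace ((INR M * h + s) / h * h) with (INR M * h + s) by (field; lra).
    nra.
Qed.

End Steps.

(** * The metric on step functions *)

Module DeltaIntegral.
Import Coquelicot.Coquelicot.

Lemma delta_comm {V : Type} (f g : R -> V) : delta f g = delta g f.
Proof.
  apply functional_extensionality; intro t; unfold delta.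
  do 2 destruct excluded_middle_informative; congruence.
Qed.

Lemma delta_bounds {V : Type} (f g : R -> V) t : 0 <= delta f g t <= 1.
Proof. unfold delta; destruct excluded_middle_informative; lra. Qed.

Lemma const_on_delta {V : Type} (f g : R -> V) p q :
  const_on f p q -> const_on g p q -> const_on (delta f g) p q.
Proof.
  intros [vf Hf] [vg Hg]; exists (delta (fun _ => vf) (fun _ => vg) 0).
  intros x Hx; unfold delta; now rewrite (Hf x Hx), (Hg x Hx).
Qed.

Lemma ex_RInt_const_on (F : R -> R) p q : p <= q -> const_on F p q -> ex_RInt F p q.
Proof.
  intros Hpq [v Hv]; apply ex_RInt_ext with (fun _ => v); [|apply ex_RInt_const].
  intros x Hx; rewrite Rmin_left, Rmax_right in Hx by lra; symmetry; apply Hv; lra.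
Qed.

Lemma ex_RInt_delta_two_pieces {V : Type} (f g : R -> V) A c1 c2 B :
  A <= c1 <= c2 -> c2 <= B ->
  const_on f A c1 -> const_on f c1 B -> const_on g A c2 -> const_on g c2 B ->
  ex_RInt (delta f g) A B.
Proof.
  intros Hc Hc2 F1 F2 G1 G2.
  apply ex_RInt_Chasles with c1; [|apply ex_RInt_Chasles with c2];
    apply ex_RInt_const_on; try lra; apply const_on_delta.
  - exact F1.
  - apply const_on_sub with A c2; auto; lra.
  - apply const_on_sub with c1 B; auto; lra.
  - apply const_on_sub with A c2; auto; lra.
  - apply const_on_sub with c1 B; auto; lra.
  - exact G2.
Qed.

Lemma ex_RInt_delta_steps {V : Type} h (a b : Z -> V) s s' A : h > 0 ->
  ex_RInt (delta (steps h a s) (steps h b s')) A (A + h).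
Proof.
  intro Hh.
  destruct (steps_two_pieces V h Hh a s A) as [c1 [Hc1 [F1 F2]]].
  destruct (steps_two_pieces V h Hh b s' A) as [c2 [Hc2 [G1 G2]]].
  destruct (Rle_dec c1 c2).
  - apply ex_RInt_delta_two_pieces with c1 c2; auto; lra.
  - rewrite delta_comm; apply ex_RInt_delta_two_pieces with c2 c1; auto; lra.
Qed.

Lemma Defs_RInt_eq (F : R -> R) A B : ex_RInt F A B -> Defs.RInt F A B = RInt F A B.
Proof.
  intro HF; unfold Defs.RInt.
  assert (Hex : exists v, exists pr : Riemann_integrable F A B, RiemannInt pr = v)
    by (exists (RiemannInt (ex_RInt_Reals_0 _ _ _ HF)); eexists; reflexivity).
  destruct (epsilon_spec (inhabits 0) _ Hex) as [pr <-].
  symmetry; apply RInt_Reals.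
Qed.

Lemma RInt_const_len (c A B : R) : RInt (fun _ => c) A B = c * (B - A).
Proof. rewrite RInt_const; unfold scal; simpl; unfold mult; simpl; ring. Qed.

Section DeltaSteps.
Variables (V : Type) (h : R) (a b : Z -> V) (s s' A : R).
Hypothesis Hh : h > 0.

Let Hint := ex_RInt_delta_steps h a b s s' A Hh.

Lemma RInt_delta_steps_bounds :
  0 <= Defs.RInt (delta (steps h a s) (steps h b s')) A (A + h) <= h.
Proof.
  rewrite Defs_RInt_eq by exact Hint.
  pose proof (RInt_const_len 0 A (A + h)); pose proof (RInt_const_len 1 A (A + h)).
  split; [apply Rle_trans with (RInt (fun _ => 0) A (A + h))
         |apply Rle_trans with (RInt (fun _ => 1) A (A + h))]; try lra;
    apply RInt_le; auto using ex_RInt_const; try lra; intros x _; apply delta_bounds.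
Qed.

Lemma RInt_delta_steps_agree :
  (forall x, A <= x <= A + h -> steps h a s x = steps h b s' x) ->
  Defs.RInt (delta (steps h a s) (steps h b s')) A (A + h) = 0.
Proof.
  intro Heq; rewrite Defs_RInt_eq by exact Hint.
  rewrite (RInt_ext _ (fun _ => 0)), RInt_const_len; [ring|].
  intros x Hx; rewrite Rmin_left, Rmax_right in Hx by lra; unfold delta.
  destruct excluded_middle_informative as [|n]; auto; exfalso; apply n, Heq; lra.
Qed.

Lemma RInt_delta_steps_differ :
  (forall x, A < x < A + h -> steps h a s x <> steps h b s' x) ->
  Defs.RInt (delta (steps h a s) (steps h b s')) A (A + h) = h.
Proof.
  intro Hne; rewrite Defs_RInt_eq by exact Hint.
  rewrite (RInt_ext _ (fun _ => 1)), RInt_const_len; [ring|].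
  intros x Hx; rewrite Rmin_left, Rmax_right in Hx by lra; unfold delta.
  destruct excluded_middle_informative as [e|]; auto; exfalso; apply (Hne x); auto; lra.
Qed.
End DeltaSteps.

End DeltaIntegral.

Definition Zsum_term (w : Z -> R) (n : nat) : R :=
  if Nat.eqb n 0 then w 0%Z else w (Z.of_nat n) + w (- Z.of_nat n)%Z.

Section Zsum.
Variable w : Z -> R.
Hypothesis Hw : forall n, 0 <= Zsum_term w n <= 2 * (/ 2) ^ n.

Lemma Zsum_partial_growing : Un_growing (sum_f_R0 (Zsum_term w)).
Proof. intro n; simpl; specialize (Hw (S n)); lra. Qed.

(* The second conjunct carries the exact geometric remainder, so the induction goes through. *)
Lemma Zsum_partial_tail M :
  (forall n, (n < M)%nat -> Zsum_term w n = 0) ->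
  forall N, ((N < M)%nat -> sum_f_R0 (Zsum_term w) N = 0) /\
            ((M <= S N)%nat -> sum_f_R0 (Zsum_term w) N <= 4 * (/ 2) ^ M - 4 * (/ 2) ^ S N).
Proof.
  intros Hz N; induction N as [|N [IH1 IH2]]; simpl sum_f_R0.
  - split; intro HM; [now apply Hz|].
    destruct M as [|[|M]]; [|rewrite Hz by lia|lia]; specialize (Hw 0%nat); simpl in *; lra.
  - split; intro HM; [rewrite IH1, Hz by lia; lra|].
    assert (Hp : (/ 2) ^ S (S N) = (/ 2) ^ S N * / 2) by (simpl; ring).
    destruct (Nat.eq_dec M (S (S N))) as [->|].
    + rewrite IH1, Hz by lia; lra.
    + specialize (IH2 ltac:(lia)); specialize (Hw (S N)); lra.
Qed.

Lemma Zsum_partial_cv : Un_cv (sum_f_R0 (Zsum_term w)) (Zsum w).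
Proof.
  assert (Hub : has_ub (sum_f_R0 (Zsum_term w))).
  { exists 4; intros x [N ->].
    destruct (Zsum_partial_tail 0 ltac:(lia) N) as [_ H]; specialize (H ltac:(lia)).
    pose proof (pow_lt (/ 2) (S N) ltac:(lra)); simpl pow in H at 1; lra. }
  destruct (growing_cv _ Zsum_partial_growing Hub) as [l Hl].
  unfold Zsum; apply epsilon_spec; now exists l.
Qed.

Lemma Zsum_ge_center : w 0%Z <= Zsum w.
Proof. exact (growing_ineq _ _ Zsum_partial_growing Zsum_partial_cv 0). Qed.

Lemma Zsum_nonneg : 0 <= Zsum w.
Proof.
  pose proof Zsum_ge_center; specialize (Hw 0%nat).
  unfold Zsum_term in Hw; simpl in Hw; lra.
Qed.

Lemma Zsum_le_tail M :
  (forall n, (n < M)%nat -> Zsum_term w n = 0) -> Zsum w <= 4 * (/ 2) ^ M.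
Proof.
  intro Hz; destruct (Rle_dec (Zsum w) (4 * (/ 2) ^ M)) as [|Hgt]; auto; exfalso.
  destruct (Zsum_partial_cv (Zsum w - 4 * (/ 2) ^ M) ltac:(lra)) as [N HN].
  specialize (HN (N + M)%nat ltac:(lia)); unfold R_dist in HN; apply Rabs_def2 in HN.
  destruct (Zsum_partial_tail M Hz (N + M)) as [_ H]; specialize (H ltac:(lia)).
  pose proof (pow_lt (/ 2) (S (N + M)) ltac:(lra)); lra.
Qed.
End Zsum.

Lemma geometric_small eps : eps > 0 -> exists M : nat, 4 * (/ 2) ^ M < eps.
Proof.
  intro He.
  destruct (pow_lt_1_zero (/ 2) ltac:(rewrite Rabs_pos_eq; lra) (eps / 4) ltac:(lra)) as [N HN].
  exists N; specialize (HN N (le_n N)).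
  rewrite Rabs_pos_eq in HN by (apply pow_le; lra); lra.
Qed.

Section StepMetric.
Variables (V : Type) (h : R).
Hypothesis Hh : h > 0.

Definition cell_weight (f g : R -> V) (i : Z) : R :=
  (/ 4) ^ Z.to_nat (Z.abs i) * (/ h * Defs.RInt (delta f g) (IZR i * h) ((IZR i + 1) * h)).

Lemma dmetric_Zsum_cell_weight (f g : R -> V) : dmetric h f g = Zsum (cell_weight f g).
Proof. reflexivity. Qed.

Lemma cell_weight_steps_bounds (a b : Z -> V) s s' i :
  0 <= cell_weight (steps h a s) (steps h b s') i <= (/ 4) ^ Z.to_nat (Z.abs i).
Proof.
  unfold cell_weight; replace ((IZR i + 1) * h) with (IZR i * h + h) by ring.
  pose proof (DeltaIntegral.RInt_delta_steps_bounds V h a b s s' (IZR i * h) Hh) as HI.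
  pose proof (pow_lt (/ 4) (Z.to_nat (Z.abs i)) ltac:(lra)).
  set (p := (/ 4) ^ _) in *; set (I := Defs.RInt _ _ _) in *.
  assert (Hn : 0 <= / h * I <= 1).
  { split; [apply Rmult_le_pos; [apply Rlt_le, Rinv_0_lt_compat|]; lra|].
    apply Rmult_le_reg_l with h; [lra|]; rewrite <- Rmult_assoc, Rinv_r; lra. }
  split; [apply Rmult_le_pos; lra|].
  rewrite <- (Rmult_1_r p) at 2; apply Rmult_le_compat_l; lra.
Qed.

Lemma Zsum_term_cell_weight_bounds (a b : Z -> V) s s' n :
  0 <= Zsum_term (cell_weight (steps h a s) (steps h b s')) n <= 2 * (/ 2) ^ n.
Proof.
  unfold Zsum_term; destruct (Nat.eqb_spec n 0) as [->|Hn].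
  - pose proof (cell_weight_steps_bounds a b s s' 0); simpl in *; lra.
  - pose proof (cell_weight_steps_bounds a b s s' (Z.of_nat n)) as H1.
    pose proof (cell_weight_steps_bounds a b s s' (- Z.of_nat n)) as H2.
    rewrite Z.abs_opp in H2; rewrite Z.abs_eq, Nat2Z.id in H1, H2 by lia.
    assert ((/ 4) ^ n <= (/ 2) ^ n) by (apply pow_incr; lra); lra.
Qed.

Lemma dmetric_steps_nonneg (a b : Z -> V) s s' :
  0 <= dmetric h (steps h a s) (steps h b s').
Proof. rewrite dmetric_Zsum_cell_weight; apply Zsum_nonneg, Zsum_term_cell_weight_bounds. Qed.

(* Agreement on the cells meeting [-M h, M h] leaves only a geometric tail. *)
Lemma dmetric_steps_le_window (a b : Z -> V) s M :
  (forall i, (window_lo h s M <= i <= window_hi h s M)%Z -> a i = b i) ->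
  dmetric h (steps h a s) (steps h b s) <= 4 * (/ 2) ^ M.
Proof.
  intro Hab; pose proof (steps_agree_on_window V h Hh a b s M Hab) as Hag.
  rewrite dmetric_Zsum_cell_weight; apply Zsum_le_tail; [apply Zsum_term_cell_weight_bounds|].
  intros n Hn; pose proof (pos_INR n).
  assert (HnM : INR n + 1 <= INR M) by (rewrite <- S_INR; apply le_INR; lia).
  assert (Hcell : forall i, - INR M <= IZR i -> IZR i + 1 <= INR M ->
            cell_weight (steps h a s) (steps h b s) i = 0).
  { intros i Hi1 Hi2; unfold cell_weight.
    replace ((IZR i + 1) * h) with (IZR i * h + h) by ring.
    rewrite DeltaIntegral.RInt_delta_steps_agree; auto; [ring|].
    intros x Hx; apply Hag; nra. }
  unfold Zsum_term; destruct (Nat.eqb_spec n 0) as [->|];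
    rewrite ?Hcell; rewrite ?opp_IZR, <- ?INR_IZR_INZ; simpl; lra.
Qed.

Lemma dmetric_steps_ge_1 (a b : Z -> V) s s' :
  (forall u, 0 < u < h -> steps h a s u <> steps h b s' u) ->
  1 <= dmetric h (steps h a s) (steps h b s').
Proof.
  intro Hne; rewrite dmetric_Zsum_cell_weight.
  eapply Rle_trans; [|apply Zsum_ge_center, Zsum_term_cell_weight_bounds].
  unfold cell_weight; simpl; replace ((0 + 1) * h) with (0 * h + h) by ring.
  rewrite DeltaIntegral.RInt_delta_steps_differ; [field_simplify; lra|lra|].
  intros x Hx; apply Hne; lra.
Qed.
End StepMetric.

(** * Walks and bi-infinite paths *)

Lemma last_cons_default {A : Type} (x : A) l d : last (x :: l) d = last l x.
Proof.
  revert x d; induction l as [|y l IH]; intros x d; [reflexivity|].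
  change (last (y :: l) d = last (y :: l) x); rewrite !IH; reflexivity.
Qed.

Lemma last_app_default {A : Type} (l1 l2 : list A) d : last (l1 ++ l2) d = last l2 (last l1 d).
Proof.
  revert d; induction l1 as [|x l1 IH]; intro d; [reflexivity|].
  simpl app; rewrite !last_cons_default; apply IH.
Qed.

Lemma nth_length_last {A : Type} (u d : A) (l : list A) : nth (length l) (u :: l) d = last l u.
Proof.
  revert u; induction l as [|w l IH]; intro u; [reflexivity|].
  change (nth (length l) (w :: l) d = last (w :: l) u); rewrite IH, last_cons_default; reflexivity.
Qed.

Lemma iter_mod_period {A : Type} (f : A -> A) x P m :
  Nat.iter P f x = x -> Nat.iter m f x = Nat.iter (m mod P) f x.
Proof.
  intro HP; transitivity (Nat.iter (m mod P + P * (m / P))%nat f x).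
  { f_equal; rewrite Nat.add_comm; apply Nat.div_mod_eq. }
  rewrite Nat.iter_add.
  f_equal; induction (m / P)%nat as [|q IH]; [rewrite Nat.mul_0_r; reflexivity|].
  now rewrite Nat.mul_succ_r, Nat.iter_add, HP.
Qed.

Section Graph.
Variables (V : Type) (E : V -> V -> bool) (C : V -> bool).

Fixpoint walk (u : V) (l : list V) : Prop :=
  match l with
  | nil => True
  | w :: l' => E u w = true /\ C w = true /\ walk w l'
  end.

Definition is_path (a : Z -> V) : Prop :=
  forall i, C (a i) = true /\ E (a i) (a (i + 1)%Z) = true.

Lemma walk_app u l1 l2 : walk u (l1 ++ l2) <-> walk u l1 /\ walk (last l1 u) l2.
Proof.
  revert u; induction l1 as [|w l1 IH]; intro u; [simpl; tauto|].
  cbn [walk app]; rewrite IH, last_cons_default; tauto.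
Qed.

Lemma walk_last_C u l : C u = true -> walk u l -> C (last l u) = true.
Proof.
  revert u; induction l as [|w l IH]; intros u Hu Hl; [exact Hu|].
  destruct Hl as [_ [Hw Hl]]; rewrite last_cons_default; auto.
Qed.

Lemma walk_nth u l d j : walk u l -> (j < length l)%nat ->
  E (nth j (u :: l) d) (nth (S j) (u :: l) d) = true /\ C (nth (S j) (u :: l) d) = true.
Proof.
  revert u j; induction l as [|w l IH]; intros u j Hl Hj; simpl in Hj; [lia|].
  destruct Hl as [He [Hw Hl]]; destruct j as [|j]; [auto|].
  apply (IH w j Hl); lia.
Qed.

Lemma reach_in_C u v : reach_in V E C u v -> C u = true /\ C v = true.
Proof. induction 1; tauto. Qed.

Lemma reach_in_walk u v :
  reach_in V E C u v -> exists l, l <> nil /\ walk u l /\ last l u = v.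
Proof.
  induction 1 as [u v Hu Hv He | u w v Hu He Hr [l [Hn [Hl Hlast]]]].
  - exists (v :: nil); simpl; intuition congruence.
  - exists (w :: l); pose proof (reach_in_C _ _ Hr).
    split; [congruence|]; split; [simpl; tauto|].
    now rewrite last_cons_default.
Qed.

Fixpoint segment (a : Z -> V) (z : Z) (n : nat) : list V :=
  match n with
  | O => nil
  | S n' => a (z + 1)%Z :: segment a (z + 1)%Z n'
  end.

Lemma segment_length a z n : length (segment a z n) = n.
Proof. revert z; induction n; simpl; auto. Qed.

Lemma segment_walk a z n : is_path a -> walk (a z) (segment a z n).
Proof. revert z; induction n; intros z Ha; simpl; auto; repeat split; auto; apply Ha. Qed.

Lemma segment_nth a z n d j :
  (j <= n)%nat -> nth j (a z :: segment a z n) d = a (z + Z.of_nat j)%Z.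
Proof.
  revert z j; induction n as [|n IH]; intros z j Hj.
  - replace j with O by lia; simpl; f_equal; lia.
  - destruct j as [|j]; simpl; [f_equal; lia|].
    change (nth j (a (z + 1)%Z :: segment a (z + 1) n) d = a (z + Z.pos (Pos.of_succ_nat j))%Z).
    rewrite IH by lia; f_equal; lia.
Qed.

Lemma segment_last a z n : last (segment a z n) (a z) = a (z + Z.of_nat n)%Z.
Proof. rewrite <- nth_length_last with (d := a z), segment_length; apply segment_nth; lia. Qed.

Section Lift.
Variable h : R.
Hypothesis Hh : h > 0.

Lemma in_Delta_C_steps f : in_Delta_C V E h C f -> exists a s, is_path a /\ f = steps h a s.
Proof.
  intros [[x [t [[Hcell Hedge] ->]]] HC].
  exists (fun i => x (IZR i * h)), t; split.
  - intro i; split.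
    + specialize (HC (IZR i * h - t)).
      now replace (IZR i * h - t + t) with (IZR i * h) in HC by ring.
    + rewrite plus_IZR; apply Hedge.
  - apply functional_extensionality; intro u; unfold steps; apply Hcell.
    destruct (Zfloor_bound ((u + t) / h)) as [K1 K2].
    replace (u + t) with ((u + t) / h * h) at 2 3 by (field; lra); split; nra.
Qed.

Lemma steps_in_Delta_C a s : is_path a -> in_Delta_C V E h C (steps h a s).
Proof.
  intro Ha; split; [|intro t; apply Ha].
  exists (steps h a 0), s; split; [split|].
  - intros n t Ht; rewrite !(steps_on_cell V h Hh a 0 n) by lra; reflexivity.
  - intro i; rewrite (steps_on_cell V h Hh a 0 i), (steps_on_cell V h Hh a 0 (i + 1));
      [apply Ha| rewrite plus_IZR | ]; lra.
  - apply functional_extensionality; intro u; unfold steps; do 3 f_equal; ring.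
Qed.
End Lift.

Lemma reach_in_succ u v : reach_in V E C u v -> exists w, C w = true /\ E u w = true.
Proof.
  induction 1 as [u v _ Hv He | u w v _ He Hr _]; eauto.
  exists w; split; auto; apply (reach_in_C _ _ Hr).
Qed.

Lemma reach_in_pred u v : reach_in V E C u v -> exists w, C w = true /\ E w v = true.
Proof. induction 1; eauto. Qed.

Definition periodic_ext (x : nat -> V) (P : nat) (z i : Z) : V :=
  x (Z.to_nat ((i - z) mod Z.of_nat P)).

Section PeriodicExt.
Variables (x : nat -> V) (P : nat) (z : Z).
Hypotheses (HP : (0 < P)%nat) (Hx : x P = x O).

Lemma periodic_ext_mod_bound i : (0 <= (i - z) mod Z.of_nat P < Z.of_nat P)%Z.
Proof. apply Z.mod_pos_bound; lia. Qed.

Lemma periodic_ext_succ i :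
  periodic_ext x P z (i + 1) = x (S (Z.to_nat ((i - z) mod Z.of_nat P))).
Proof.
  unfold periodic_ext; pose proof (periodic_ext_mod_bound i) as Hm.
  replace (i + 1 - z)%Z with ((i - z) + 1)%Z by ring.
  rewrite <- Z.add_mod_idemp_l by lia.
  destruct (Z.eq_dec ((i - z) mod Z.of_nat P + 1) (Z.of_nat P)) as [Heq|].
  - rewrite Heq, Z.mod_same by lia; change (Z.to_nat 0) with O; rewrite <- Hx; f_equal; lia.
  - rewrite Z.mod_small by lia; f_equal; lia.
Qed.

Lemma periodic_ext_path :
  (forall j, (j < P)%nat -> E (x j) (x (S j)) = true /\ C (x (S j)) = true) ->
  is_path (periodic_ext x P z).
Proof.
  intros Hw i; pose proof (periodic_ext_mod_bound (i - 1)) as Hm1.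
  pose proof (periodic_ext_mod_bound i) as Hm.
  replace i with (i - 1 + 1)%Z at 1 by ring; rewrite !periodic_ext_succ.
  split; [apply Hw; lia|].
  unfold periodic_ext at 1; replace (i - 1 + 1)%Z with i by ring; apply Hw; lia.
Qed.

Lemma periodic_ext_period i : periodic_ext x P z (i + Z.of_nat P) = periodic_ext x P z i.
Proof.
  unfold periodic_ext; do 2 f_equal.
  replace (i + Z.of_nat P - z)%Z with ((i - z) + 1 * Z.of_nat P)%Z by ring.
  apply Z_mod_plus_full.
Qed.

Lemma periodic_ext_window i :
  (z <= i < z + Z.of_nat P)%Z -> periodic_ext x P z i = x (Z.to_nat (i - z)).
Proof. intro Hi; unfold periodic_ext; rewrite Z.mod_small by lia; reflexivity. Qed.
End PeriodicExt.

(** * Strongly connected components *)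

Section StronglyConnected.
Variable v0 : V.
Hypothesis Hv0 : C v0 = true.
Hypothesis HSC : forall u v, C u = true -> C v = true -> reach_in V E C u v.

Definition next (u : V) : V := epsilon (inhabits v0) (fun w => C w = true /\ E u w = true).
Definition prev (u : V) : V := epsilon (inhabits v0) (fun w => C w = true /\ E w u = true).

Lemma next_spec u : C u = true -> C (next u) = true /\ E u (next u) = true.
Proof. intro Hu; unfold next; apply epsilon_spec, (reach_in_succ u u), HSC; auto. Qed.

Lemma prev_spec u : C u = true -> C (prev u) = true /\ E (prev u) u = true.
Proof. intro Hu; unfold prev; apply epsilon_spec, (reach_in_pred u u), HSC; auto. Qed.

Lemma iter_next_C u n : C u = true -> C (Nat.iter n next u) = true.
Proof. intro Hu; apply Nat.iter_invariant; auto; intros; apply next_spec; auto. Qed.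

Lemma iter_prev_C u n : C u = true -> C (Nat.iter n prev u) = true.
Proof. intro Hu; apply Nat.iter_invariant; auto; intros; apply prev_spec; auto. Qed.

Fixpoint follow (u : V) (l : list V) (j : nat) : V :=
  match l, j with
  | nil, _ => Nat.iter (S j) next u
  | w :: _, O => w
  | w :: l', S j' => follow w l' j'
  end.

Lemma follow_walk u l : C u = true -> walk u l ->
  E u (follow u l 0) = true /\
  forall j, C (follow u l j) = true /\ E (follow u l j) (follow u l (S j)) = true.
Proof.
  revert u; induction l as [|w l IH]; intros u Hu Hl.
  - split; [apply next_spec; auto|]; intro j; simpl follow.
    pose proof (iter_next_C u (S j) Hu); split; [auto|apply next_spec; auto].
  - destruct Hl as [He [Hw Hl]]; destruct (IH w Hw Hl) as [IH0 IHS].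
    split; [exact He|]; intros [|j]; [split; auto|apply IHS].
Qed.

Lemma follow_app u l1 l2 j : follow u (l1 ++ l2) (length l1 + j) = follow (last l1 u) l2 j.
Proof.
  revert u; induction l1 as [|w l1 IH]; intro u; [reflexivity|].
  rewrite last_cons_default; apply IH.
Qed.

Definition splice (a : Z -> V) (K : Z) (l : list V) (i : Z) : V :=
  if Z.leb i K then a i else follow (a K) l (Z.to_nat (i - K - 1)).

Lemma splice_path a K l : is_path a -> walk (a K) l -> is_path (splice a K l).
Proof.
  intros Ha Hl; destruct (follow_walk (a K) l (proj1 (Ha K)) Hl) as [F0 F].
  intro i; unfold splice; destruct (Z.leb_spec i K), (Z.leb_spec (i + 1) K).
  - apply Ha.
  - replace i with K by lia; split; [apply Ha|].
    now replace (Z.to_nat (K + 1 - K - 1)) with O by lia.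
  - lia.
  - replace (Z.to_nat (i + 1 - K - 1)) with (S (Z.to_nat (i - K - 1))) by lia; apply F.
Qed.

(* Walk from [a K] to [v] and leave [v] by the successor that differs from [a]. *)
Lemma path_branch_off a K v w1 w2 :
  is_path a -> C v = true -> C w1 = true -> C w2 = true ->
  E v w1 = true -> E v w2 = true -> w1 <> w2 ->
  exists b j, is_path b /\ (K < j)%Z /\ (forall i, (i <= K)%Z -> b i = a i) /\ b j <> a j.
Proof.
  intros Ha Hv Hw1 Hw2 He1 He2 Hne.
  destruct (reach_in_walk _ _ (HSC (a K) v (proj1 (Ha K)) Hv)) as [l [_ [Hl Hlast]]].
  set (j := (K + 1 + Z.of_nat (length l))%Z).
  set (w := if excluded_middle_informative (a j = w1) then w2 else w1).
  assert (Hw : C w = true /\ E v w = true /\ w <> a j)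
    by (unfold w; destruct excluded_middle_informative as [->|]; auto).
  exists (splice a K (l ++ w :: nil)), j; split; [|split; [lia|split]].
  - apply splice_path; auto; apply walk_app; rewrite Hlast; simpl; tauto.
  - intros i Hi; unfold splice; destruct (Z.leb_spec i K); [auto|lia].
  - unfold splice; destruct (Z.leb_spec j K); [lia|].
    replace (Z.to_nat (j - K - 1)) with (length l + 0)%nat by lia.
    rewrite follow_app; simpl; tauto.
Qed.

(* Close the finite stretch [a lo], ..., [a hi] into a cycle and repeat it. *)
Lemma path_periodic_approx a lo hi : is_path a -> (lo <= hi)%Z ->
  exists b P, is_path b /\ (0 < P)%Z /\ (forall i, b (i + P)%Z = b i) /\
    forall i, (lo <= i <= hi)%Z -> b i = a i.
Proof.
  intros Ha Hlh; set (n := Z.to_nat (hi - lo)).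
  destruct (reach_in_walk _ _ (HSC (a hi) (a lo) (proj1 (Ha hi)) (proj1 (Ha lo))))
    as [l [Hn [Hl Hlast]]].
  set (cyc := segment a lo n ++ l).
  assert (Hhi : (lo + Z.of_nat n)%Z = hi) by lia.
  assert (Hwalk : walk (a lo) cyc)
    by (apply walk_app; rewrite segment_last, Hhi; split; auto; apply segment_walk, Ha).
  assert (Hlen : length cyc = (n + length l)%nat)
    by (unfold cyc; rewrite length_app, segment_length; auto).
  assert (Hl1 : (1 <= length l)%nat) by (destruct l; [congruence|simpl; lia]).
  set (x := fun j => nth j (a lo :: cyc) (a lo)).
  assert (Hx : x (length cyc) = x O)
    by (unfold x, cyc; rewrite nth_length_last, last_app_default, segment_last, Hhi; auto).
  exists (periodic_ext x (length cyc) lo), (Z.of_nat (length cyc)); split; [|split; [lia|split]].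
  - apply periodic_ext_path; [lia|auto|]; intros j Hj; apply walk_nth; auto.
  - intro i; apply periodic_ext_period.
  - intros i Hi; rewrite periodic_ext_window by lia; unfold x, cyc.
    rewrite app_comm_cons, app_nth1 by (simpl; rewrite segment_length; lia).
    rewrite segment_nth by lia; f_equal; lia.
Qed.

Section UniversalWalk.
Variable enum : list V.
Hypothesis Henum : forall v, In v enum.

Fixpoint words (n : nat) : list (list V) :=
  match n with
  | O => nil :: nil
  | S n' => flat_map (fun x => map (cons x) (words n')) enum
  end.

Lemma words_complete l : In l (words (length l)).
Proof.
  induction l as [|x l IH]; simpl; auto.
  apply in_flat_map; exists x; split; auto; apply in_map; auto.
Qed.

Definition admissible (l : list V) : Prop :=
  match l with nil => False | u :: w => C u = true /\ walk u w end.

Definition route (e u : V) : list V :=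
  epsilon (inhabits nil) (fun r => r <> nil /\ walk e r /\ last r e = u).

Lemma route_spec e u : C e = true -> C u = true ->
  route e u <> nil /\ walk e (route e u) /\ last (route e u) e = u.
Proof. intros; unfold route; apply epsilon_spec, reach_in_walk, HSC; auto. Qed.

Definition detour (e : V) (l : list V) : list V :=
  match l with
  | nil => nil
  | u :: w => if excluded_middle_informative (C u = true /\ walk u w) then route e u ++ w else nil
  end.

Lemma detour_walk e l : C e = true -> walk e (detour e l).
Proof.
  intro He; destruct l as [|u w]; simpl; auto.
  destruct excluded_middle_informative as [[Hu Hw]|]; simpl; auto.
  destruct (route_spec e u He Hu) as [_ [Hr Hlast]]; apply walk_app; rewrite Hlast; auto.
Qed.

Lemma detour_suffix e l : C e = true -> admissible l -> exists A, detour e l = A ++ l.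
Proof.
  intros He Hl; destruct l as [|u w]; [destruct Hl|]; simpl.
  destruct excluded_middle_informative as [[Hu Hw]|]; [|contradiction].
  destruct (route_spec e u He Hu) as [Hn [_ Hlast]].
  exists (removelast (route e u)).
  rewrite (app_removelast_last e Hn) at 1; rewrite Hlast, <- app_assoc; reflexivity.
Qed.

Fixpoint tour (e : V) (ls : list (list V)) : list V :=
  match ls with
  | nil => nil
  | l :: ls' => detour e l ++ tour (last (detour e l) e) ls'
  end.

Lemma tour_walk ls : forall e, C e = true -> walk e (tour e ls).
Proof.
  induction ls as [|l ls IH]; intros e He; simpl; auto.
  apply walk_app; split; [apply detour_walk; auto|].
  apply IH, walk_last_C; auto; apply detour_walk; auto.
Qed.

Lemma tour_app ls1 ls2 e : tour e (ls1 ++ ls2) = tour e ls1 ++ tour (last (tour e ls1) e) ls2.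
Proof.
  revert e; induction ls1 as [|l ls1 IH]; intro e; simpl; auto.
  rewrite IH, <- app_assoc, last_app_default; reflexivity.
Qed.

Lemma tour_contains ls l e : C e = true -> In l ls -> admissible l ->
  exists A B, tour e ls = A ++ l ++ B.
Proof.
  intros He Hin Hl; destruct (in_split _ _ Hin) as [ls1 [ls2 ->]].
  rewrite tour_app; simpl; set (e' := last (tour e ls1) e).
  assert (He' : C e' = true) by (apply walk_last_C; auto; apply tour_walk; auto).
  destruct (detour_suffix e' l He' Hl) as [A ->].
  exists (tour e ls1 ++ A), (tour (last (A ++ l) e') ls2); rewrite !app_assoc; reflexivity.
Qed.

(* Stage [n + 1] visits every admissible word of length [n]; the extra [next] step makes the
   stages grow. *)
Fixpoint stage (n : nat) : list V :=
  match n with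
  | O => nil
  | S n' => stage n' ++ next (last (stage n') v0) :: tour (next (last (stage n') v0)) (words n')
  end.

Lemma stage_walk n : walk v0 (stage n).
Proof.
  induction n as [|n IH]; simpl; auto; apply walk_app; split; auto.
  pose proof (next_spec _ (walk_last_C v0 _ Hv0 IH)) as [Hc He].
  simpl; repeat split; auto; apply tour_walk; auto.
Qed.

Lemma stage_length n : (n <= length (stage n))%nat.
Proof. induction n; simpl; [lia|]; rewrite length_app; simpl; lia. Qed.

Lemma stage_prefix m n : (m <= n)%nat -> exists t, stage n = stage m ++ t.
Proof.
  induction 1 as [|n _ [t Ht]]; [exists nil; symmetry; apply app_nil_r|].
  simpl; rewrite Ht; eexists; rewrite <- app_assoc; reflexivity.
Qed.

Lemma stage_nth_stable m n j : (j <= length (stage m))%nat -> (j <= length (stage n))%nat ->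
  nth j (v0 :: stage m) v0 = nth j (v0 :: stage n) v0.
Proof.
  intros Hm Hn; destruct (Nat.le_ge_cases m n) as [Hle|Hle];
    destruct (stage_prefix _ _ Hle) as [t ->];
    rewrite app_comm_cons, app_nth1; simpl; auto; lia.
Qed.

Definition univ (j : nat) : V := nth j (v0 :: stage j) v0.

Lemma univ_stage j n : (j <= length (stage n))%nat -> univ j = nth j (v0 :: stage n) v0.
Proof. intro; apply stage_nth_stable; auto using stage_length. Qed.

Lemma univ_step j : E (univ j) (univ (S j)) = true /\ C (univ (S j)) = true.
Proof.
  pose proof (stage_length (S j)); rewrite !(univ_stage _ (S j)) by lia.
  apply walk_nth; [apply stage_walk|lia].
Qed.

Lemma univ_contains l : admissible l ->
  exists p, forall j, (j < length l)%nat -> univ (p + j) = nth j l v0.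
Proof.
  intro Hl; set (n := length l); set (e := next (last (stage n) v0)).
  assert (He : C e = true) by (apply next_spec, walk_last_C, stage_walk; auto).
  destruct (tour_contains (words n) l e He (words_complete l) Hl) as [A [B HAB]].
  assert (Hst : stage (S n) = stage n ++ e :: A ++ l ++ B)
    by (simpl; fold e; rewrite HAB; reflexivity).
  exists (S (length (stage n) + 1 + length A)); intros j Hj.
  rewrite (univ_stage _ (S n)) by (rewrite Hst, length_app; simpl; rewrite !length_app; lia).
  rewrite Hst; simpl nth; rewrite app_nth2 by lia.
  replace (length (stage n) + 1 + length A + j - length (stage n))%nat
    with (S (length A + j)) by lia.
  simpl nth; rewrite app_nth2 by lia; replace (length A + j - length A)%nat with j by lia.
  apply app_nth1; auto.
Qed.

Definition univ_path (i : Z) : V :=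
  if Z.leb 0 i then univ (Z.to_nat i) else Nat.iter (Z.to_nat (- i)) prev v0.

Lemma univ_path_path : is_path univ_path.
Proof.
  intro i; unfold univ_path; destruct (Z.leb_spec 0 i), (Z.leb_spec 0 (i + 1)); try lia.
  - replace (Z.to_nat (i + 1)) with (S (Z.to_nat i)) by lia; split; [|apply univ_step].
    destruct (Z.to_nat i); [exact Hv0|apply univ_step].
  - replace i with (-1)%Z by lia; simpl; split; [apply prev_spec; auto|].
    apply prev_spec; auto.
  - replace (Z.to_nat (- i)) with (S (Z.to_nat (- (i + 1)))) by lia; simpl.
    split; apply prev_spec, iter_prev_C; auto.
Qed.

Lemma univ_path_window b : is_path b -> forall k,
  exists p : nat, forall i, (- Z.of_nat k <= i <= Z.of_nat k)%Z ->
    univ_path (i + Z.of_nat (p + k)) = b i.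
Proof.
  intros Hb k; set (l := b (- Z.of_nat k)%Z :: segment b (- Z.of_nat k) (2 * k)).
  assert (Hl : admissible l) by (split; [apply Hb|apply segment_walk; auto]).
  destruct (univ_contains l Hl) as [p Hp]; exists p; intros i Hi.
  unfold univ_path; destruct (Z.leb_spec 0 (i + Z.of_nat (p + k))); [|lia].
  replace (Z.to_nat (i + Z.of_nat (p + k))) with (p + Z.to_nat (i + Z.of_nat k))%nat by lia.
  rewrite Hp by (unfold l; simpl; rewrite segment_length; lia).
  unfold l; rewrite segment_nth by lia; f_equal; lia.
Qed.
End UniversalWalk.

Section Flow.
Variable h : R.
Hypothesis Hh : h > 0.

Let X := in_Delta_C V E h C.

Lemma sensitive_Delta_C_of_branching v w1 w2 :
  C v = true -> C w1 = true -> C w2 = true -> E v w1 = true -> E v w2 = true -> w1 <> w2 ->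
  sensitive X (dmetric h) psi.
Proof.
  intros Hv Hw1 Hw2 He1 He2 Hne; exists (1 / 2); split; [lra|].
  intros f Hf eps Heps; destruct (in_Delta_C_steps h Hh f Hf) as [a [s [Ha ->]]].
  destruct (geometric_small eps Heps) as [M HM].
  destruct (path_branch_off a (window_hi h s M) v w1 w2) as [b [j [Hb [Hj [Hba Hbj]]]]]; auto.
  exists (steps h b s), (IZR j * h - s); split; [apply steps_in_Delta_C; auto|split; [|split]].
  - eapply Rle_lt_trans; [|exact HM]; apply dmetric_steps_le_window; auto.
    intros i Hi; symmetry; apply Hba; lia.
  - destruct (Zfloor_bound ((INR M * h + s) / h)) as [_ Hfl].
    assert (Hj1 : IZR (window_hi h s M) + 1 <= IZR j) by (rewrite <- plus_IZR; apply IZR_le; lia).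
    fold (window_hi h s M) in Hfl.
    assert (Hs : s < IZR j * h); [|lra].
    replace s with (s / h * h) by (field; lra); apply Rmult_lt_compat_r; [lra|].
    pose proof (pos_INR M); apply Rle_lt_trans with ((INR M * h + s) / h); [|lra].
    apply Rmult_le_compat_r; [apply Rlt_le, Rinv_0_lt_compat|]; nra.
  - rewrite !psi_steps; apply Rlt_le_trans with 1; [lra|]; apply dmetric_steps_ge_1; auto.
    intros u Hu; rewrite !(steps_on_cell V h Hh _ _ j u) by lra; auto.
Qed.

Lemma dense_periodic_Delta_C : dense_periodic X (dmetric h) psi.
Proof.
  intros f Hf eps Heps; destruct (in_Delta_C_steps h Hh f Hf) as [a [s [Ha ->]]].
  destruct (geometric_small eps Heps) as [M HM].
  assert (Hlh : (window_lo h s M <= window_hi h s M)%Z).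
  { pose proof (pos_INR M); apply Zfloor_le, Rmult_le_compat_r;
      [apply Rlt_le, Rinv_0_lt_compat|]; nra. }
  destruct (path_periodic_approx a _ _ Ha Hlh) as [b [P [Hb [HP [Hper Hba]]]]].
  exists (steps h b s); split; [apply steps_in_Delta_C; auto|split].
  - exists (IZR P * h); split; [apply Rmult_lt_0_compat; auto; apply IZR_lt; lia|].
    rewrite psi_steps; apply steps_periodic; auto.
  - eapply Rle_lt_trans; [|exact HM]; apply dmetric_steps_le_window; auto.
    intros i Hi; symmetry; auto.
Qed.

Section Transitive.
Variable enum : list V.
Hypothesis Henum : forall v, In v enum.

Lemma top_transitive_Delta_C : top_transitive X (dmetric h) psi.
Proof.
  exists (steps h (univ_path enum) 0); split; [apply steps_in_Delta_C, univ_path_path; auto|].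
  intro y; split; [intros [Hy _]; exact Hy|intro Hy; split; [exact Hy|]].
  destruct (in_Delta_C_steps h Hh y Hy) as [b [s [Hb ->]]].
  destruct (choice _ (univ_path_window enum Henum b Hb)) as [p Hp].
  exists (fun k => s + INR (p k + k) * h); split.
  - intro T; destruct (INR_unbounded ((T - s) / h)) as [N HN]; exists N; intros k Hk.
    assert (INR N <= INR (p k + k)) by (apply le_INR; lia).
    replace T with (s + (T - s) / h * h) by (field; lra).
    apply Rplus_lt_compat_l, Rmult_lt_compat_r; lra.
  - intros eps Heps; destruct (geometric_small eps Heps) as [M HM].
    destruct (window_eventually_within h Hh s M) as [N HN]; exists N; intros k Hk.
    unfold R_dist; rewrite Rminus_0_r, psi_steps.
    rewrite Rabs_pos_eq by (apply dmetric_steps_nonneg; exact Hh).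
    replace (0 + (s + INR (p k + k) * h)) with (s + IZR (Z.of_nat (p k + k)) * h)
      by (rewrite <- INR_IZR_INZ; ring).
    rewrite <- (steps_shift V h Hh).
    eapply Rle_lt_trans; [|exact HM]; apply dmetric_steps_le_window; auto.
    intros i Hi; apply Hp; specialize (HN k Hk); lia.
Qed.
End Transitive.
End Flow.

Section Cycle.
Hypothesis Hunique : forall u w1 w2, C u = true -> C w1 = true -> E u w1 = true ->
  C w2 = true -> E u w2 = true -> w1 = w2.

Lemma next_unique u w : C u = true -> C w = true -> E u w = true -> w = next u.
Proof. intros Hu Hw He; destruct (next_spec u Hu); apply (Hunique u); auto. Qed.

Lemma walk_iter_next u l : C u = true -> walk u l -> last l u = Nat.iter (length l) next u.
Proof.
  revert u; induction l as [|w l IH]; intros u Hu Hl; [reflexivity|].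
  destruct Hl as [He [Hw Hl]].
  rewrite last_cons_default, IH, (next_unique u w), <- Nat.iter_succ_r; auto.
Qed.

Lemma reach_iter_next u v : C u = true -> C v = true ->
  exists k, (0 < k)%nat /\ v = Nat.iter k next u.
Proof.
  intros Hu Hv; destruct (reach_in_walk _ _ (HSC u v Hu Hv)) as [l [Hn [Hl <-]]].
  exists (length l); split; [destruct l; [congruence|simpl; lia]|].
  apply walk_iter_next; auto.
Qed.

Section Period.
Variable P : nat.
Hypotheses (HP : (0 < P)%nat) (HPv0 : Nat.iter P next v0 = v0).

Definition cycle_path : Z -> V := periodic_ext (fun j => Nat.iter j next v0) P 0.

Lemma cycle_path_path : is_path cycle_path.
Proof.
  apply periodic_ext_path; auto; intros j _; simpl.
  destruct (next_spec _ (iter_next_C v0 j Hv0)); auto.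
Qed.

Lemma cycle_path_succ i : cycle_path (i + 1) = next (cycle_path i).
Proof. unfold cycle_path; rewrite periodic_ext_succ; auto. Qed.

Lemma cycle_path_iter k : cycle_path (Z.of_nat k) = Nat.iter k next v0.
Proof.
  unfold cycle_path, periodic_ext; rewrite Z.sub_0_r, <- Nat2Z.inj_mod, Nat2Z.id.
  symmetry; apply iter_mod_period; auto.
Qed.

Lemma C_in_cycle c : C c = true -> exists k, c = cycle_path k.
Proof.
  intro Hc; destruct (reach_iter_next v0 c Hv0 Hc) as [k [_ ->]].
  exists (Z.of_nat k); symmetry; apply cycle_path_iter.
Qed.

(* Running once more around the cycle recovers [x] from [next x]. *)
Lemma next_injective x y : C x = true -> C y = true -> next x = next y -> x = y.
Proof.
  assert (Hback : forall m, Nat.iter m next v0 = Nat.iter (P - 1) next (next (Nat.iter m next v0))).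
  { intro m; rewrite <- (Nat.iter_succ m), <- Nat.iter_add.
    replace (P - 1 + S m)%nat with (m + P)%nat by lia; now rewrite Nat.iter_add, HPv0. }
  intros Hx Hy Hxy.
  destruct (reach_iter_next v0 x Hv0 Hx) as [m [_ ->]].
  destruct (reach_iter_next v0 y Hv0 Hy) as [m' [_ ->]].
  now rewrite Hback, Hxy, <- Hback.
Qed.

Lemma path_is_cycle_shift b : is_path b -> exists c, forall i, b i = cycle_path (i + c).
Proof.
  intro Hb; destruct (C_in_cycle (b 0%Z) (proj1 (Hb 0%Z))) as [c Hc]; exists c.
  apply Z.bi_induction; [intros x y Hxy; unfold Z.eq in Hxy; subst; reflexivity|exact Hc|].
  intro i; pose proof (cycle_path_path (i + c)%Z) as [Hci _].
  unfold Z.succ; replace (i + 1 + c)%Z with (i + c + 1)%Z by ring.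
  rewrite cycle_path_succ; destruct (Hb i) as [Hbi Hbe].
  rewrite (next_unique (b i) (b (i + 1)%Z)) by (auto; apply Hb).
  split; [intros ->; reflexivity|apply next_injective; auto].
Qed.
End Period.

Lemma Delta_C_single_periodic_orbit h : h > 0 ->
  exists f, in_Delta_C V E h C f /\ periodic_point psi f /\
    forall g, in_Delta_C V E h C g <-> exists t, g = psi t f.
Proof.
  intro Hh; destruct (reach_iter_next v0 v0 Hv0 Hv0) as [P [HP HPv0]].
  exists (steps h (cycle_path P) 0); split; [apply steps_in_Delta_C, cycle_path_path; auto|split].
  - exists (IZR (Z.of_nat P) * h); split; [apply Rmult_lt_0_compat; auto; apply IZR_lt; lia|].
    rewrite psi_steps; apply steps_periodic; auto.
    intro i; apply periodic_ext_period; auto.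
  - intro g; split;
      [intro Hg|intros [t ->]; rewrite psi_steps; apply steps_in_Delta_C, cycle_path_path; auto].
    destruct (in_Delta_C_steps h Hh g Hg) as [b [s [Hb ->]]].
    destruct (path_is_cycle_shift P HP (eq_sym HPv0) b Hb) as [c Hc].
    exists (s + IZR c * h); rewrite psi_steps, Rplus_0_l, <- (steps_shift V h Hh).
    f_equal; apply functional_extensionality; auto.
Qed.
End Cycle.
End StronglyConnected.
End Graph.

Section OutDegree.
Variables (V : Type) (E : V -> V -> bool) (C : V -> bool) (enum : list V).

Lemma outdeg_gt1_branching v : NoDup enum -> (outdeg_in V E enum C v > 1)%nat ->
  exists w1 w2, C w1 = true /\ C w2 = true /\ E v w1 = true /\ E v w2 = true /\ w1 <> w2.
Proof.
  unfold outdeg_in; intros Hnd Hdeg.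
  pose proof (NoDup_filter (fun w => C w && E v w)%bool Hnd) as Hnd'.
  assert (Hin : forall w, In w (filter (fun w => C w && E v w)%bool enum) ->
                 C w = true /\ E v w = true)
    by (intros w Hw; apply filter_In in Hw as [_ Hw]; apply andb_prop; auto).
  destruct (filter _ enum) as [|w1 [|w2 l]]; simpl in Hdeg; try lia.
  exists w1, w2; destruct (Hin w1) as [Hc1 He1]; [simpl; auto|].
  destruct (Hin w2) as [Hc2 He2]; [simpl; auto|].
  repeat split; auto; intros ->; inversion Hnd'; simpl in *; tauto.
Qed.

Lemma outdeg_1_unique : (forall v, In v enum) ->
  (forall v, C v = true -> outdeg_in V E enum C v = 1%nat) ->
  forall u w1 w2, C u = true -> C w1 = true -> E u w1 = true ->
    C w2 = true -> E u w2 = true -> w1 = w2.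
Proof.
  intros Henum Hdeg u w1 w2 Hu Hc1 He1 Hc2 He2; specialize (Hdeg u Hu); unfold outdeg_in in Hdeg.
  assert (Hin : forall w, C w = true -> E u w = true ->
                 In w (filter (fun w => C w && E u w)%bool enum))
    by (intros w Hc He; apply filter_In; rewrite Hc, He; auto).
  pose proof (Hin w1 Hc1 He1) as H1; pose proof (Hin w2 Hc2 He2) as H2.
  destruct (filter _ enum) as [|z [|z' l]]; simpl in Hdeg, H1, H2; try lia.
  intuition congruence.
Qed.
End OutDegree.

Theorem mainTheorem13
  (V : Type) (enum : list V) (Henum_nodup : NoDup enum) (Henum_full : forall v : V, In v enum)
  (E : V -> V -> bool) (h : R) (Hh : h > 0) (C : V -> bool) (HC : is_SCC V E C) :
  ((exists v, C v = true /\ (outdeg_in V E enum C v > 1)%nat) ->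
     chaotic (in_Delta_C V E h C) (dmetric h) psi) /\
  ((forall v, C v = true -> outdeg_in V E enum C v = 1%nat) ->
     exists f, in_Delta_C V E h C f /\ periodic_point psi f /\
       forall g, in_Delta_C V E h C g <-> exists t, g = psi t f).
Proof.
  destruct HC as [[[v0 Hv0] HSC] _]; split.
  - intros [v [Hv Hdeg]].
    destruct (outdeg_gt1_branching V E C enum v Henum_nodup Hdeg)
      as [w1 [w2 [Hc1 [Hc2 [He1 [He2 Hne]]]]]].
    split; [|split].
    + exact (sensitive_Delta_C_of_branching V E C v0 HSC h Hh v w1 w2 Hv Hc1 Hc2 He1 He2 Hne).
    + exact (dense_periodic_Delta_C V E C HSC h Hh).
    + exact (top_transitive_Delta_C V E C v0 Hv0 HSC h Hh enum Henum_full).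
  - intro Hdeg; apply (Delta_C_single_periodic_orbit V E C v0 Hv0 HSC); auto.
    apply outdeg_1_unique with enum; auto.
Qed.
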